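(* The following identities hold: (i) $M(1;2;1;x)\cdot M(1;2;1;-x)=1$ as formal power series in $x$; (ii) $M(0;2;1;x)=-M(0;2;1;-x)$ as formal power series in $x$; (iii) for complex $|x|<1$ the series $M(0;2;1;x)$ converges and equals $\operatorname{arsinh}(x)$ (principal branch, $\operatorname{arsinh}(0)=0$).
   Context: For $m,a,b\in\mathbb{C}$ the master series is the power series $M(m;a;b;x)=m+x+\sum_{\ell\ge 2}\frac{x^\ell}{\ell!}\prod_{\gamma=1}^{\ell-1}(m-a\gamma+b\ell)$. *)

From Stdlib Require Import Reals Factorial.
From Coquelicot Require Import Coquelicot.
Open Scope C_scope.

Fixpoint prodC (f : nat -> C) (n : nat) : C :=
  match n with
  | O => 1
  | S k => prodC f k * f (S k)
  end.

Fixpoint powC (z : C) (n : nat) : C :=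
  match n with
  | O => 1
  | S k => z * powC z k
  end.

(* Coefficient of x^l in the master series M(m;a;b;x):
   l = 0 : m ;  l >= 1 : (1/l!) prod_{g=1}^{l-1} (m - a g + b l)
   (for l = 1 the empty product gives 1, matching the term x). *)
Definition master_coef (m a b : C) (l : nat) : C :=
  match l with
  | O => m
  | S _ => prodC (fun g => m - a * RtoC (INR g) + b * RtoC (INR l)) (l - 1)
           / RtoC (INR (Factorial.fact l))
  end.

(* principal argument, in (-PI, PI], with Arg 0 = 0 *)
Definition Arg (w : C) : R :=
  let u := fst w in let v := snd w in
  if Rlt_dec 0 u then atan (v / u)
  else if Rlt_dec u 0 then
         (if Rle_dec 0 v then (atan (v / u) + PI)%R else (atan (v / u) - PI)%R)
  else if Rlt_dec 0 v then (PI / 2)%R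
  else if Rlt_dec v 0 then (- (PI / 2))%R
  else 0%R.

Definition Clog (w : C) : C := (ln (Cmod w), Arg w).

(* principal square root: Re >= 0, and Im >= 0 when Re = 0 *)
Definition Csqrt (w : C) : C :=
  let u := fst w in let v := snd w in
  (sqrt ((Cmod w + u) / 2),
   if Rlt_dec v 0 then (- sqrt ((Cmod w - u) / 2))%R
   else sqrt ((Cmod w - u) / 2)).

Definition Carsinh (z : C) : C := Clog (z + Csqrt (z * z + 1)).

From Stdlib Require Import Reals Lra Lia Factorial.
From Coquelicot Require Import Coquelicot.

(* The coefficients c_n of M(0;2;1;x) and b_n of M(1;2;1;x) obey the two-step recurrences
   (n+2)(n+1) c_(n+2) = -n^2 c_n and (n+2) b_(n+2) = (1-n) b_n.  As c_0 = 0, c is odd: this is (ii).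
   As b_1 = 1 and b_3 = 0, b = x + r with r even and (1 + x^2) r' = x r; then r^2 solves
   (1 + x^2) (r^2)' = 2 x r^2, so r^2 = 1 + x^2 and M(1;2;1;x) M(1;2;1;-x) = (r + x)(r - x) = 1.
   For (iii) fix 0 < |x| < 1 and let F(s) = M(0;2;1;s x) for real s in [0,1].  The recurrence for
   c says (1 + s^2 x^2) F'' + s x^2 F' = 0, hence (1 + s^2 x^2) F'^2 = x^2, and with
   Q = (1 + s^2 x^2) F' / x, a square root of 1 + s^2 x^2, the function e^(-F) (s x + Q) is
   constant, i.e. e^F = s x + Q.  If cos (Im F) vanished then so would Re Q, contradicting
   Re (Q^2) = Re (1 + s^2 x^2) > 0; so by continuity |Im F| < pi/2 throughout.  At s = 1 this makes
   Q the principal square root of 1 + x^2 and F the principal logarithm of x + Q. *)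

Ltac C_componentwise := apply injective_projections; simpl; try field; try ring.

Open Scope R_scope.

(** * Real coefficients and their recurrences *)

Fixpoint prodR (f : nat -> R) (n : nat) : R :=
  match n with O => 1 | S k => prodR f k * f (S k) end.

Definition master_coefR (m a b : R) (l : nat) : R :=
  match l with
  | O => m
  | S _ => prodR (fun g => m - a * INR g + b * INR l) (l - 1) / INR (fact l)
  end.

Lemma prodR_ext f g n : (forall k, f k = g k) -> prodR f n = prodR g n.
Proof. intros H; induction n; simpl; congruence. Qed.

Lemma prodR_shift f n : prodR f (S n) = f 1%nat * prodR (fun g => f (S g)) n.
Proof. induction n; simpl in *; [ring | rewrite IHn; ring]. Qed.

Lemma prodC_ext f g n : (forall k, f k = g k) -> prodC f n = prodC g n.
Proof. intros H; induction n; simpl; congruence. Qed.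

Lemma prodC_RtoC (f : nat -> R) n : prodC (fun g => RtoC (f g)) n = RtoC (prodR f n).
Proof. induction n; simpl; [reflexivity | rewrite IHn; C_componentwise]. Qed.

Lemma master_coef_RtoC m a b l :
  master_coef (RtoC m) (RtoC a) (RtoC b) l = RtoC (master_coefR m a b l).
Proof.
  destruct l as [|l]; [reflexivity|]. unfold master_coef, master_coefR.
  rewrite RtoC_div by apply INR_fact_neq_0. rewrite <- prodC_RtoC. f_equal.
  apply prodC_ext. intros g. C_componentwise.
Qed.

Lemma master_coefR_2_1_rec m k :
  master_coefR m 2 1 (S (S (S k)))
  = (m + INR (S k)) * (m - INR (S k)) / (INR (S (S (S k))) * INR (S (S k)))
    * master_coefR m 2 1 (S k).
Proof.
  unfold master_coefR. replace (S (S (S k)) - 1)%nat with (S (S k)) by lia.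
  replace (S k - 1)%nat with k by lia.
  (* Shifting g to g + 1 matches the product for l = k + 3 with the one for l = k + 1, leaving
     over the factors m + k + 1 (at g = 1) and m - k - 1 (at g = k + 2). *)
  rewrite prodR_shift.
  rewrite (prodR_ext _ (fun g => m - 2 * INR g + 1 * INR (S k)))
    by (intros; rewrite !S_INR; ring).
  cbn [prodR].
  set (P := prodR _ k). rewrite !fact_simpl, !mult_INR.
  assert (H := INR_fact_neq_0 k).
  assert (H1 : INR (S k) <> 0) by (apply not_0_INR; lia).
  assert (H2 : INR (S (S k)) <> 0) by (apply not_0_INR; lia).
  assert (H3 : INR (S (S (S k))) <> 0) by (apply not_0_INR; lia).
  rewrite !S_INR in *. change (INR 0) with 0. field. repeat split; auto.
Qed.

Lemma nat_ind2 (P : nat -> Prop) :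
  P 0%nat -> P 1%nat -> (forall n, P n -> P (S (S n))) -> forall n, P n.
Proof.
  intros H0 H1 HS n. enough (P n /\ P (S n)) by tauto.
  induction n as [|n [IH IH']]; auto.
Qed.

Definition rec2 (f u : nat -> R) : Prop := forall n, u (S (S n)) = f n * u n.

Section TwoStepRecurrence.

Variable f : nat -> R.

Lemma rec2_unique u v : rec2 f u -> rec2 f v -> u 0%nat = v 0%nat -> u 1%nat = v 1%nat ->
  forall n, u n = v n.
Proof.
  intros Hu Hv H0 H1. apply nat_ind2; auto.
  intros n IH. rewrite Hu, Hv, IH. reflexivity.
Qed.

Lemma rec2_even u : rec2 f u -> u 1%nat = 0 -> forall n, (-1) ^ n * u n = u n.
Proof.
  intros Hu H1. apply (rec2_unique (fun n => (-1) ^ n * u n)); auto.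
  - intros n. rewrite Hu. simpl. ring.
  - simpl. ring.
  - simpl. rewrite H1. ring.
Qed.

Lemma rec2_odd u : rec2 f u -> u 0%nat = 0 -> forall n, (-1) ^ n * u n = - u n.
Proof.
  intros Hu H0. apply (rec2_unique (fun n => (-1) ^ n * u n) (fun n => - u n)).
  - intros n. rewrite Hu. simpl. ring.
  - intros n. rewrite Hu. ring.
  - simpl. rewrite H0. ring.
  - simpl. ring.
Qed.

Lemma rec2_bound u : rec2 f u -> (forall n, Rabs (f n) <= 1) ->
  Rabs (u 0%nat) <= 1 -> Rabs (u 1%nat) <= 1 -> forall n, Rabs (u n) <= 1.
Proof.
  intros Hu Hf H0 H1. apply nat_ind2; auto. intros n IH.
  rewrite Hu, Rabs_mult. specialize (Hf n).
  pose proof (Rabs_pos (f n)). pose proof (Rabs_pos (u n)). nra.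
Qed.

End TwoStepRecurrence.

Definition arsinh_coef : nat -> R := master_coefR 0 2 1.
Definition exp_arsinh_coef : nat -> R := master_coefR 1 2 1.

Lemma arsinh_coef_0 : arsinh_coef 0 = 0.
Proof. reflexivity. Qed.

Lemma arsinh_coef_1 : arsinh_coef 1 = 1.
Proof. unfold arsinh_coef, master_coefR. simpl. field. Qed.

Lemma exp_arsinh_coef_0 : exp_arsinh_coef 0 = 1.
Proof. reflexivity. Qed.

Lemma exp_arsinh_coef_1 : exp_arsinh_coef 1 = 1.
Proof. unfold exp_arsinh_coef, master_coefR. simpl. field. Qed.

Lemma arsinh_coef_rec2 :
  rec2 (fun n => - (INR n * INR n) / (INR (S (S n)) * INR (S n))) arsinh_coef.
Proof.
  intros [|k].
  - unfold arsinh_coef, master_coefR. simpl. field.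
  - unfold arsinh_coef. rewrite master_coefR_2_1_rec. f_equal. field.
    split; apply not_0_INR; lia.
Qed.

Lemma exp_arsinh_coef_rec2 :
  rec2 (fun n => (1 - INR n) / INR (S (S n))) exp_arsinh_coef.
Proof.
  intros [|k].
  - unfold exp_arsinh_coef, master_coefR. simpl. field.
  - unfold exp_arsinh_coef. rewrite master_coefR_2_1_rec. f_equal.
    assert (H3 : INR (S (S (S k))) <> 0) by (apply not_0_INR; lia).
    assert (H2 : INR (S (S k)) <> 0) by (apply not_0_INR; lia).
    rewrite !S_INR in *. field. split; assumption.
Qed.

Lemma arsinh_coef_ode k :
  INR (S (S k)) * INR (S k) * arsinh_coef (S (S k)) + INR k * INR k * arsinh_coef k = 0.
Proof.
  rewrite arsinh_coef_rec2. field.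
  split; apply not_0_INR; lia.
Qed.

Lemma arsinh_coef_odd n : (-1) ^ n * arsinh_coef n = - arsinh_coef n.
Proof. exact (rec2_odd _ _ arsinh_coef_rec2 arsinh_coef_0 n). Qed.

Lemma arsinh_coef_bound n : Rabs (arsinh_coef n) <= 1.
Proof.
  apply (rec2_bound _ _ arsinh_coef_rec2).
  - intros k. pose proof (pos_INR k).
    assert (Hp : 0 < INR (S (S k)) * INR (S k))
      by (apply Rmult_lt_0_compat; apply lt_0_INR; lia).
    rewrite Rabs_div, Rabs_Ropp, Rabs_right, Rabs_right by (lra || nra).
    apply Rle_div_l; [lra|]. rewrite !S_INR. nra.
  - rewrite arsinh_coef_0, Rabs_R0. lra.
  - rewrite arsinh_coef_1, Rabs_R1. lra.
Qed.

(** * Cauchy products and the reflection identity *)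

Lemma PS_mult_ext a a' b b' n :
  (forall k, a k = a' k) -> (forall k, b k = b' k) -> PS_mult a b n = PS_mult a' b' n.
Proof. intros Ha Hb. apply sum_eq. intros k _. rewrite Ha, Hb. reflexivity. Qed.

Lemma PS_mult_comm a b n : PS_mult a b n = PS_mult b a n.
Proof.
  unfold PS_mult. rewrite <- sum_f_R0_skip. apply sum_eq. intros k Hk.
  rewrite Nat.sub_sub_distr, Nat.sub_diag by lia. apply Rmult_comm.
Qed.

Lemma PS_mult_lin_l (c : R) a a' b n :
  PS_mult (fun k => c * a k - a' k) b n = c * PS_mult a b n - PS_mult a' b n.
Proof.
  unfold PS_mult. rewrite scal_sum, <- minus_sum. apply sum_eq. intros; ring.
Qed.

Lemma PS_mult_incr_1_l a b n : PS_mult (PS_incr_1 a) b (S n) = PS_mult a b n.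
Proof.
  unfold PS_mult. rewrite decomp_sum by lia. simpl. rewrite Rmult_0_l, Rplus_0_l.
  reflexivity.
Qed.

Lemma PS_mult_leibniz a b n :
  INR n * PS_mult a b n
  = PS_mult (fun k => INR k * a k) b n + PS_mult a (fun k => INR k * b k) n.
Proof.
  unfold PS_mult. rewrite scal_sum, <- plus_sum. apply sum_eq.
  intros k Hk. rewrite minus_INR by exact Hk. ring.
Qed.

Lemma PS_mult_incr_2_l a b n : PS_mult (PS_incr_n a 2) b (S (S n)) = PS_mult a b n.
Proof. exact (eq_trans (PS_mult_incr_1_l _ _ _) (PS_mult_incr_1_l _ _ _)). Qed.

(* The coefficientwise form of (1 + x^2) r' = alpha x r, whose solutions are the
   multiples of (1 + x^2)^(alpha/2). *)
Definition binomial_sq_ode (alpha : R) (r : nat -> R) : Prop :=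
  r 1%nat = 0 /\ rec2 (fun n => (alpha - INR n) / INR (S (S n))) r.

Lemma binomial_sq_ode_incr alpha r : binomial_sq_ode alpha r ->
  forall k, INR k * r k = alpha * PS_incr_n r 2 k - PS_incr_n (fun j => INR j * r j) 2 k.
Proof.
  intros [H1 Hrec] [|[|j]]; cbn [PS_incr_n PS_incr_1]; change zero with 0.
  - simpl. ring.
  - rewrite H1. ring.
  - rewrite Hrec. field. apply not_0_INR. lia.
Qed.

Lemma binomial_sq_ode_mult alpha beta r s :
  binomial_sq_ode alpha r -> binomial_sq_ode beta s ->
  binomial_sq_ode (alpha + beta) (PS_mult r s).
Proof.
  intros Hr Hs. split.
  - unfold PS_mult. simpl. rewrite (proj1 Hr), (proj1 Hs). ring.
  - intros n. assert (Hn : INR (S (S n)) <> 0) by (apply not_0_INR; lia).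
    apply (Rmult_eq_reg_l (INR (S (S n)))); [|exact Hn].
    rewrite PS_mult_leibniz.
    rewrite (PS_mult_ext _ _ s s _ (binomial_sq_ode_incr _ _ Hr)) by reflexivity.
    rewrite (PS_mult_comm r), (PS_mult_ext _ _ r r _ (binomial_sq_ode_incr _ _ Hs))
      by reflexivity.
    rewrite !PS_mult_lin_l, !PS_mult_incr_2_l.
    rewrite (PS_mult_comm s r), (PS_mult_comm _ r).
    pose proof (PS_mult_leibniz r s n) as Hl.
    field_simplify; [|exact Hn]. lra.
Qed.

Definition PS_X (n : nat) : R := if Nat.eqb n 1 then 1 else 0.

Lemma PS_X_odd n : (-1) ^ n * PS_X n = - PS_X n.
Proof. unfold PS_X. destruct (Nat.eqb_spec n 1) as [->|]; simpl; ring. Qed.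

Lemma sum_f_R0_first f m : (forall k, (0 < k)%nat -> f k = 0) -> sum_f_R0 f m = f 0%nat.
Proof. intros H; induction m; simpl; [reflexivity|]. rewrite IHm, (H (S m)) by lia. ring. Qed.

Lemma PS_mult_X_l a n : PS_mult PS_X a n = PS_incr_1 a n.
Proof.
  destruct n as [|n]; unfold PS_mult.
  - unfold PS_X. simpl. change zero with 0. ring.
  - rewrite decomp_sum by lia. simpl pred.
    rewrite sum_f_R0_first by (intros [|k] Hk; [lia | unfold PS_X; simpl; ring]).
    unfold PS_X. simpl. rewrite Nat.sub_0_r. ring.
Qed.

Definition sqrt_1_add_sq_coef (n : nat) : R := exp_arsinh_coef n - PS_X n.

Lemma sqrt_1_add_sq_coef_ode : binomial_sq_ode 1 sqrt_1_add_sq_coef.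
Proof.
  unfold sqrt_1_add_sq_coef. split.
  - rewrite exp_arsinh_coef_1. unfold PS_X. simpl. ring.
  - intros n. rewrite exp_arsinh_coef_rec2. unfold PS_X.
    assert (Hn : INR (S (S n)) <> 0) by (apply not_0_INR; lia).
    destruct n as [|[|n]]; cbn [Nat.eqb]; [|change (INR 1) with 1|]; field; exact Hn.
Qed.

Definition PS_1_add_X2 (n : nat) : R :=
  if Nat.eqb n 0 then 1 else if Nat.eqb n 2 then 1 else 0.

Lemma PS_1_add_X2_ode : binomial_sq_ode 2 PS_1_add_X2.
Proof.
  split; [reflexivity|].
  intros n. assert (Hn : INR (S (S n)) <> 0) by (apply not_0_INR; lia).
  destruct n as [|[|[|n]]]; unfold PS_1_add_X2; cbn [Nat.eqb]; [simpl; field..|].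
  field. exact Hn.
Qed.

Lemma sqrt_1_add_sq_coef_square n :
  PS_mult sqrt_1_add_sq_coef sqrt_1_add_sq_coef n = PS_1_add_X2 n.
Proof.
  pose proof (binomial_sq_ode_mult _ _ _ _ sqrt_1_add_sq_coef_ode sqrt_1_add_sq_coef_ode)
    as [H1 Hrec].
  replace (1 + 1) with 2 in Hrec by ring.
  apply (rec2_unique _ _ _ Hrec (proj2 PS_1_add_X2_ode)); [|exact H1].
  unfold PS_mult, sqrt_1_add_sq_coef, PS_X, PS_1_add_X2. simpl. ring.
Qed.

Lemma exp_arsinh_coef_reflection n :
  sum_f_R0 (fun k => exp_arsinh_coef k * ((-1) ^ (n - k) * exp_arsinh_coef (n - k))) n
  = if Nat.eqb n 0 then 1 else 0.
Proof.
  set (s := sqrt_1_add_sq_coef).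
  assert (Hb : forall k, exp_arsinh_coef k = s k + PS_X k)
    by (intros; unfold s, sqrt_1_add_sq_coef; ring).
  assert (Halt : forall k, (-1) ^ k * exp_arsinh_coef k = s k - PS_X k).
  { intros k. destruct sqrt_1_add_sq_coef_ode as [H1 Hrec].
    rewrite Hb, Rmult_plus_distr_l, PS_X_odd, (rec2_even _ _ Hrec H1). reflexivity. }
  transitivity (PS_mult s s n - PS_mult PS_X PS_X n + (PS_mult PS_X s n - PS_mult s PS_X n)).
  { unfold PS_mult. rewrite <- !minus_sum, <- plus_sum.
    apply sum_eq. intros k _. rewrite Halt, Hb. ring. }
  rewrite (PS_mult_comm s PS_X), Rminus_diag, Rplus_0_r.
  unfold s. rewrite sqrt_1_add_sq_coef_square, PS_mult_X_l.
  destruct n as [|[|[|n]]]; unfold PS_1_add_X2, PS_X; simpl; change zero with 0; ring.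
Qed.

Open Scope C_scope.

Lemma sum_n_RtoC (f : nat -> R) n : sum_n (fun k => RtoC (f k)) n = RtoC (sum_f_R0 f n).
Proof.
  induction n; [rewrite sum_O; reflexivity|].
  rewrite sum_Sn, IHn. C_componentwise.
Qed.

Lemma powC_RtoC (x : R) n : powC (RtoC x) n = RtoC (x ^ n).
Proof. induction n; simpl; [reflexivity | rewrite IHn; C_componentwise]. Qed.

Lemma master_coef_reflection n :
  sum_n (fun k => master_coef 1 2 1 k * (powC (-1) (n - k) * master_coef 1 2 1 (n - k))) n
  = (if Nat.eqb n 0 then RtoC 1 else RtoC 0).
Proof.
  rewrite (sum_n_ext _ (fun k => RtoC (exp_arsinh_coef k
                                  * ((-1) ^ (n - k) * exp_arsinh_coef (n - k))))).
  - rewrite sum_n_RtoC, exp_arsinh_coef_reflection. destruct (Nat.eqb n 0); reflexivity.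
  - intros k. rewrite !master_coef_RtoC, powC_RtoC. unfold exp_arsinh_coef. C_componentwise.
Qed.

Lemma master_coef_odd n : master_coef 0 2 1 n = - (powC (-1) n * master_coef 0 2 1 n).
Proof.
  rewrite master_coef_RtoC, powC_RtoC.
  pose proof (arsinh_coef_odd n) as H. unfold arsinh_coef in H.
  C_componentwise; lra.
Qed.

(** * Complex-valued functions of a real variable *)

Open Scope R_scope.

Definition is_derive_RC (f : R -> C) (t : R) (l : C) : Prop :=
  is_derive (fun s => fst (f s)) t (fst l) /\ is_derive (fun s => snd (f s)) t (snd l).

Lemma is_derive_RC_const (c : C) t : is_derive_RC (fun _ => c) t 0.
Proof. split; apply (is_derive_const (K := R_AbsRing) (V := R_NormedModule)). Qed.

Lemma is_derive_RC_id t : is_derive_RC RtoC t 1.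
Proof.
  split; simpl; [apply (is_derive_id (K := R_AbsRing))
         | apply (is_derive_const (K := R_AbsRing) (V := R_NormedModule))].
Qed.

Lemma is_derive_eq_l (f : R -> R) t l l' : is_derive f t l -> l = l' -> is_derive f t l'.
Proof. intros H <-. exact H. Qed.

Lemma is_derive_RC_eq f t l l' : is_derive_RC f t l -> l = l' -> is_derive_RC f t l'.
Proof. intros H <-. exact H. Qed.

Lemma is_derive_RC_plus f g t df dg : is_derive_RC f t df -> is_derive_RC g t dg ->
  is_derive_RC (fun s => (f s + g s)%C) t (df + dg)%C.
Proof.
  intros [Hf1 Hf2] [Hg1 Hg2]. split.
  - exact (is_derive_plus _ _ _ _ _ Hf1 Hg1).
  - exact (is_derive_plus _ _ _ _ _ Hf2 Hg2).
Qed.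

Lemma is_derive_RC_mult f g t df dg : is_derive_RC f t df -> is_derive_RC g t dg ->
  is_derive_RC (fun s => (f s * g s)%C) t (df * g t + f t * dg)%C.
Proof.
  intros [Hf1 Hf2] [Hg1 Hg2].
  pose proof (is_derive_mult _ _ _ _ _ Hf1 Hg1 Rmult_comm) as H11.
  pose proof (is_derive_mult _ _ _ _ _ Hf1 Hg2 Rmult_comm) as H12.
  pose proof (is_derive_mult _ _ _ _ _ Hf2 Hg1 Rmult_comm) as H21.
  pose proof (is_derive_mult _ _ _ _ _ Hf2 Hg2 Rmult_comm) as H22.
  split; eapply is_derive_eq_l.
  - exact (is_derive_minus _ _ _ _ _ H11 H22).
  - unfold minus, plus, opp, mult; simpl; ring.
  - exact (is_derive_plus _ _ _ _ _ H12 H21).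
  - unfold minus, plus, opp, mult; simpl; ring.
Qed.


Definition cexp (z : C) : C := (exp (fst z) * cos (snd z), exp (fst z) * sin (snd z)).

Lemma cexp_add a b : cexp (a + b)%C = (cexp a * cexp b)%C.
Proof. unfold cexp. simpl. rewrite exp_plus, cos_plus, sin_plus. C_componentwise. Qed.

Lemma cexp_0 : cexp 0 = 1%C.
Proof. unfold cexp. simpl. rewrite exp_0, cos_0, sin_0. C_componentwise. Qed.

Lemma is_derive_RC_cexp f t df : is_derive_RC f t df ->
  is_derive_RC (fun s => cexp (f s)) t (df * cexp (f t))%C.
Proof.
  intros [Hf1 Hf2].
  pose proof (is_derive_comp _ _ _ _ _ (is_derive_exp _) Hf1) as He.
  pose proof (is_derive_comp _ _ _ _ _ (is_derive_cos _) Hf2) as Hc.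
  pose proof (is_derive_comp _ _ _ _ _ (is_derive_sin _) Hf2) as Hs.
  split; eapply is_derive_eq_l.
  - exact (is_derive_mult _ _ _ _ _ He Hc Rmult_comm).
  - unfold cexp, plus, mult, scal; simpl; unfold mult; simpl; ring.
  - exact (is_derive_mult _ _ _ _ _ He Hs Rmult_comm).
  - unfold cexp, plus, mult, scal; simpl; unfold mult; simpl; ring.
Qed.

Lemma is_derive_RC_zero_const f a b :
  (forall s, a <= s <= b -> is_derive_RC f s 0) -> forall s, a <= s <= b -> f s = f a.
Proof.
  intros H s Hs. destruct (Req_dec s a) as [->|Hsa]; [reflexivity|].
  apply injective_projections; symmetry.
  - apply (eq_is_derive (fun u => fst (f u))); [|lra].
    intros u Hu. apply (H u ltac:(lra)).
  - apply (eq_is_derive (fun u => snd (f u))); [|lra].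
    intros u Hu. apply (H u ltac:(lra)).
Qed.

Ltac derive_RC :=
  repeat first [ simple apply is_derive_RC_const | simple apply is_derive_RC_id | eassumption
               | simple apply is_derive_RC_plus | simple apply is_derive_RC_mult
               | simple apply is_derive_RC_cexp ].

Definition PSeriesC (a : nat -> C) (t : R) : C :=
  (PSeries (fun n => fst (a n)) t, PSeries (fun n => snd (a n)) t).

Definition PS_deriveC (a : nat -> C) (n : nat) : C := (RtoC (INR (S n)) * a (S n))%C.

Definition in_CV_diskC (a : nat -> C) (t : R) : Prop :=
  Rbar_lt (Rabs t) (CV_radius (fun n => fst (a n)))
  /\ Rbar_lt (Rabs t) (CV_radius (fun n => snd (a n))).

Lemma PS_deriveC_fst a n : fst (PS_deriveC a n) = PS_derive (fun k => fst (a k)) n.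
Proof. unfold PS_deriveC, PS_derive. simpl. ring. Qed.

Lemma PS_deriveC_snd a n : snd (PS_deriveC a n) = PS_derive (fun k => snd (a k)) n.
Proof. unfold PS_deriveC, PS_derive. simpl. ring. Qed.

Lemma in_CV_diskC_derive a t : in_CV_diskC a t -> in_CV_diskC (PS_deriveC a) t.
Proof.
  unfold in_CV_diskC. rewrite (CV_radius_ext _ _ (PS_deriveC_fst a)).
  rewrite (CV_radius_ext _ _ (PS_deriveC_snd a)), !CV_radius_derive. exact (fun H => H).
Qed.

Lemma is_derive_PSeriesC a t : in_CV_diskC a t ->
  is_derive_RC (PSeriesC a) t (PSeriesC (PS_deriveC a) t).
Proof.
  intros [H1 H2]. unfold PSeriesC. split; simpl.
  - rewrite (PSeries_ext _ _ _ (PS_deriveC_fst a)). exact (is_derive_PSeries _ _ H1).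
  - rewrite (PSeries_ext _ _ _ (PS_deriveC_snd a)). exact (is_derive_PSeries _ _ H2).
Qed.

Lemma CV_radius_ge_inv (v : nat -> R) rho : 0 < rho ->
  (forall n, Rabs (v n) <= rho ^ n) -> Rbar_le (/ rho) (CV_radius v).
Proof.
  intros Hrho Hv. apply (proj1 (CV_radius_bounded v)). exists 1. intros n.
  rewrite Rabs_mult, <- RPow_abs, Rabs_inv, (Rabs_right rho) by lra.
  rewrite pow_inv. apply Rle_div_l; [apply pow_lt; lra|]. rewrite Rmult_1_l. apply Hv.
Qed.

Lemma in_CV_diskC_geom a rho t : 0 < rho -> (forall n, Cmod (a n) <= rho ^ n) ->
  Rabs t < / rho -> in_CV_diskC a t.
Proof.
  intros Hrho Ha Ht.
  assert (Hc : forall v : nat -> R, (forall n, Rabs (v n) <= rho ^ n) ->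
                 Rbar_lt (Rabs t) (CV_radius v)).
  { intros v Hv. eapply Rbar_lt_le_trans; [|exact (CV_radius_ge_inv v rho Hrho Hv)].
    exact Ht. }
  split; apply Hc; intros n; apply (Rle_trans _ (Cmod (a n))); try apply Ha;
    (eapply Rle_trans; [|apply Rmax_Cmod]).
  - apply Rmax_l.
  - apply Rmax_r.
Qed.

Lemma is_series_C_split (u : nat -> C) (l : C) :
  is_series (fun n => fst (u n)) (fst l) -> is_series (fun n => snd (u n)) (snd l) ->
  is_series u l.
Proof.
  intros H1 H2. unfold is_series in *. apply filterlim_locally. intros eps.
  generalize (filter_and _ _ (proj1 (filterlim_locally _ _) H1 eps)
                             (proj1 (filterlim_locally _ _) H2 eps)).
  apply filter_imp. intros n [B1 B2].
  assert (E : forall k, sum_n u k = (sum_n (fun j => fst (u j)) k, sum_n (fun j => snd (u j)) k)).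
  { intros k. induction k; [rewrite !sum_O; apply surjective_pairing|].
    rewrite !sum_Sn, IHk. reflexivity. }
  rewrite E. split; assumption.
Qed.

Lemma is_pseries_zero {K : AbsRing} {V : NormedModule K} (z : K) :
  is_pseries (fun _ : nat => @zero V) z zero.
Proof.
  unfold is_pseries, is_series. eapply filterlim_ext; [|apply filterlim_const].
  intros n. rewrite (sum_n_ext _ (fun _ => zero))
    by (intros; exact (scal_zero_r (V := NormedModule.ModuleSpace K V) _)).
  symmetry. apply sum_n_m_const_zero.
Qed.

Lemma pow_n_powC (z : C) k : pow_n (K := C_AbsRing) z k = powC z k.
Proof. induction k; simpl; [reflexivity | rewrite IHk; reflexivity]. Qed.

Lemma is_pseries_PSeriesC a t : in_CV_diskC a t -> is_pseries a (RtoC t) (PSeriesC a t).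
Proof.
  intros [H1 H2]. apply CV_radius_inside, PSeries_correct in H1, H2.
  apply is_series_C_split; (eapply is_series_ext; [|eassumption]); intros n;
    change (scal (pow_n (RtoC t) n) (a n)) with (pow_n (RtoC t) n * a n)%C;
    rewrite pow_n_powC, powC_RtoC, pow_n_pow; simpl;
    unfold scal; simpl; unfold mult; simpl; ring.
Qed.

Lemma Csqrt_sq r : 0 < fst r -> Csqrt (r * r)%C = r.
Proof.
  destruct r as [p q]. simpl. intros Hp. unfold Csqrt.
  change ((p, q) * (p, q))%C with (p * p - q * q, p * q + q * p).
  replace (Cmod (p * p - q * q, p * q + q * p)) with (p * p + q * q).
  2:{ unfold Cmod. simpl. rewrite <- (sqrt_square (p * p + q * q)) by nra. f_equal. ring. }
  simpl. f_equal.
  - replace ((p * p + q * q + (p * p - q * q)) / 2) with (p * p) by field.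
    apply sqrt_square. lra.
  - replace ((p * p + q * q - (p * p - q * q)) / 2) with (q * q) by field.
    destruct (Rlt_dec (p * q + q * p) 0).
    + assert (q < 0) by nra.
      replace (q * q) with (- q * - q) by ring. rewrite sqrt_square; lra.
    + assert (0 <= q) by nra. apply sqrt_square. lra.
Qed.

Lemma Clog_cexp z : - (PI / 2) < snd z < PI / 2 -> Clog (cexp z) = z.
Proof.
  destruct z as [a b]. simpl. intros Hb. unfold Clog, cexp, Arg. simpl.
  assert (Hc : 0 < cos b) by (apply cos_gt_0; lra).
  assert (He : 0 < exp a) by apply exp_pos.
  f_equal.
  - unfold Cmod. simpl.
    replace (exp a * cos b * (exp a * cos b * 1) + exp a * sin b * (exp a * sin b * 1))
      with (exp a * exp a * (Rsqr (sin b) + Rsqr (cos b))) by (unfold Rsqr; ring).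
    rewrite sin2_cos2, Rmult_1_r, sqrt_square by lra. apply ln_exp.
  - destruct (Rlt_dec 0 (exp a * cos b)) as [_|N]; [|exfalso; apply N; nra].
    replace (exp a * sin b / (exp a * cos b)) with (tan b) by (unfold tan; field; lra).
    apply atan_tan. lra.
Qed.

(** * The arsinh series *)

Lemma continuity_stays_below (g : R -> R) a b c :
  (forall s, a <= s <= b -> continuity_pt g s) -> g a < c ->
  (forall s, a <= s <= b -> g s <> c) -> forall s, a <= s <= b -> g s < c.
Proof.
  intros Hg Ha Hne s Hs. destruct (Rlt_or_le (g s) c) as [|Hle]; [assumption|exfalso].
  destruct (Req_dec (g s) c) as [E|Hlt]; [exact (Hne s Hs E)|].
  destruct (Req_dec s a) as [->|Hsa]; [lra|].
  destruct (Ranalysis5.IVT_interv (fun u => g u - c) a s) as [z [Hz Ez]].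
  - intros u Hu. apply continuity_pt_minus; [apply Hg; lra|].
    apply continuity_pt_const. now intros ? ?.
  - lra.
  - lra.
  - lra.
  - apply (Hne z); lra.
Qed.

Open Scope C_scope.

Definition arsinh_ray (x : C) (n : nat) : C := RtoC (arsinh_coef n) * powC x n.

Lemma Cmod_powC x n : Cmod (powC x n) = (Cmod x ^ n)%R.
Proof. induction n; simpl; [apply Cmod_1 | rewrite Cmod_mult, IHn; reflexivity]. Qed.

Lemma Cmod_arsinh_ray x n : (Cmod (arsinh_ray x n) <= Cmod x ^ n)%R.
Proof.
  unfold arsinh_ray. rewrite Cmod_mult, Cmod_R, Cmod_powC.
  rewrite <- (Rmult_1_l (Cmod x ^ n)) at 2.
  apply Rmult_le_compat_r; [apply pow_le, Cmod_ge_0 | apply arsinh_coef_bound].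
Qed.

Lemma arsinh_ray_ode x n :
  PS_plus (PS_deriveC (PS_deriveC (arsinh_ray x)))
    (PS_plus (PS_scal (x * x) (PS_incr_n (PS_deriveC (PS_deriveC (arsinh_ray x))) 2))
             (PS_scal (x * x) (PS_incr_1 (PS_deriveC (arsinh_ray x))))) n = zero.
Proof.
  (* The n-th coefficient is x^(n+2) times the left-hand side of arsinh_coef_ode n. *)
  pose proof (f_equal RtoC (arsinh_coef_ode n)) as H.
  rewrite RtoC_plus, !RtoC_mult in H.
  lazymatch type of H with ?e = _ => transitivity (powC x (S (S n)) * e) end.
  2:{ rewrite H. apply Cmult_0_r. }
  unfold PS_plus, PS_scal.
  destruct n as [|[|m]]; cbn [PS_incr_n PS_incr_1]; unfold PS_deriveC, arsinh_ray;
    cbn -[INR arsinh_coef Cmult Cplus RtoC powC];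
    rewrite !S_INR, ?INR_0, !RtoC_plus; cbn [powC]; ring.
Qed.

Section ArsinhAlongRay.

Variable x : C.
Hypothesis Hx : (0 < Cmod x < 1)%R.

Let a0 := arsinh_ray x.
Let a1 := PS_deriveC a0.
Let a2 := PS_deriveC a1.
Let F := PSeriesC a0.
Let F1 := PSeriesC a1.
Let F2 := PSeriesC a2.
Let q (s : R) : C := 1 + RtoC s * RtoC s * x * x.

Lemma in_CV_disk_ray s : (0 <= s <= 1)%R ->
  in_CV_diskC a0 s /\ in_CV_diskC a1 s /\ in_CV_diskC a2 s.
Proof.
  intros Hs.
  assert (H0 : in_CV_diskC a0 s).
  { apply (in_CV_diskC_geom _ (Cmod x)); [lra | apply Cmod_arsinh_ray |].
    rewrite Rabs_right by lra. apply (Rle_lt_trans _ 1); [lra|].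
    rewrite <- Rinv_1. apply Rinv_lt_contravar; lra. }
  pose proof (in_CV_diskC_derive _ _ H0) as H1.
  pose proof (in_CV_diskC_derive _ _ H1) as H2.
  tauto.
Qed.

Lemma is_derive_F s : (0 <= s <= 1)%R -> is_derive_RC F s (F1 s).
Proof. intros Hs. apply is_derive_PSeriesC, in_CV_disk_ray, Hs. Qed.

Lemma is_derive_F1 s : (0 <= s <= 1)%R -> is_derive_RC F1 s (F2 s).
Proof. intros Hs. apply is_derive_PSeriesC, in_CV_disk_ray, Hs. Qed.

Lemma F_ode s : (0 <= s <= 1)%R -> F2 s * q s + RtoC s * x * x * F1 s = 0.
Proof.
  intros Hs. destruct (in_CV_disk_ray s Hs) as (_ & H1 & H2).
  apply is_pseries_PSeriesC in H1, H2.
  set (t := RtoC s) in *.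
  pose proof (is_pseries_scal (x * x) _ t _ (Cmult_comm _ _) (is_pseries_incr_n _ 2 _ _ H2))
    as Hs2.
  pose proof (is_pseries_scal (x * x) _ t _ (Cmult_comm _ _) (is_pseries_incr_1 _ _ _ H1))
    as Hs1.
  pose proof (is_pseries_plus _ _ _ _ _ H2 (is_pseries_plus _ _ _ _ _ Hs2 Hs1)) as Hsum.
  apply (is_pseries_ext _ _ _ _ (arsinh_ray_ode x)) in Hsum.
  pose proof (filterlim_locally_unique _ _ _ Hsum (is_pseries_zero t)) as E.
  change (F2 s + (x * x * (t * (t * 1) * F2 s) + x * x * (t * F1 s)) = 0) in E.
  rewrite <- E. unfold q, t. ring.
Qed.

Lemma F_0 : F 0%R = 0.
Proof.
  unfold F, PSeriesC. rewrite !PSeries_0.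
  unfold a0, arsinh_ray. rewrite arsinh_coef_0. C_componentwise.
Qed.

Lemma F1_0 : F1 0%R = x.
Proof.
  unfold F1, PSeriesC. rewrite !PSeries_0.
  unfold a1, a0, PS_deriveC, arsinh_ray. rewrite arsinh_coef_1. C_componentwise.
Qed.

Lemma q_F1_sq s : (0 <= s <= 1)%R -> q s * F1 s * F1 s = x * x.
Proof.
  intros Hs. rewrite (is_derive_RC_zero_const (fun s => q s * F1 s * F1 s) 0 1); try lra.
  - rewrite F1_0. unfold q. C_componentwise.
  - intros u Hu. pose proof (is_derive_F1 u Hu). eapply is_derive_RC_eq.
    + unfold q. derive_RC.
    + transitivity (2 * F1 u * (F2 u * q u + RtoC u * x * x * F1 u)); [unfold q; ring|].
      rewrite F_ode by exact Hu. ring.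
Qed.

Lemma x_neq_0 : x <> 0.
Proof. intros E. rewrite E, Cmod_0 in Hx. lra. Qed.

Let Q (s : R) : C := F1 s * q s / x.

Lemma Q_sq s : (0 <= s <= 1)%R -> Q s * Q s = q s.
Proof.
  intros Hs. pose proof x_neq_0. unfold Q.
  transitivity (q s * (q s * F1 s * F1 s) / (x * x)); [field; assumption|].
  rewrite q_F1_sq by exact Hs. field. assumption.
Qed.

Lemma cexp_neg_F_mul s : (0 <= s <= 1)%R -> cexp (RtoC (-1) * F s) * (RtoC s * x + Q s) = 1.
Proof.
  intros Hs. pose proof x_neq_0.
  rewrite (is_derive_RC_zero_const
             (fun s => cexp (RtoC (-1) * F s) * (RtoC s * x + Q s)) 0 1); try lra.
  - unfold Q, q. rewrite F_0, F1_0. replace (RtoC (-1) * 0) with (RtoC 0) by ring.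
    rewrite cexp_0. field. assumption.
  - intros u Hu. pose proof (is_derive_F u Hu). pose proof (is_derive_F1 u Hu).
    eapply is_derive_RC_eq.
    + unfold Q, q, Cdiv. derive_RC.
    + transitivity (cexp (RtoC (-1) * F u)
        * ((x * x - q u * F1 u * F1 u + (F2 u * q u + RtoC u * x * x * F1 u)) / x)).
      * unfold Q, q. field. assumption.
      * rewrite q_F1_sq, F_ode by exact Hu. field. assumption.
Qed.

Lemma cexp_F s : (0 <= s <= 1)%R -> cexp (F s) = RtoC s * x + Q s.
Proof.
  intros Hs.
  transitivity (cexp (F s) * (cexp (RtoC (-1) * F s) * (RtoC s * x + Q s))).
  - rewrite cexp_neg_F_mul by exact Hs. ring.
  - rewrite Cmult_assoc, <- cexp_add.
    replace (F s + RtoC (-1) * F s) with (RtoC 0) by ring.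
    rewrite cexp_0. ring.
Qed.

Lemma cexp_neg_F s : (0 <= s <= 1)%R -> cexp (RtoC (-1) * F s) = Q s - RtoC s * x.
Proof.
  intros Hs.
  transitivity (cexp (RtoC (-1) * F s) * (RtoC s * x + Q s) * (Q s - RtoC s * x)).
  - rewrite <- Cmult_assoc.
    replace ((RtoC s * x + Q s) * (Q s - RtoC s * x)) with (Q s * Q s - RtoC s * RtoC s * x * x)
      by ring.
    rewrite Q_sq by exact Hs. unfold q. ring.
  - rewrite cexp_neg_F_mul by exact Hs. ring.
Qed.

Lemma Re_Q s : (0 <= s <= 1)%R ->
  (2 * fst (Q s) = (exp (fst (F s)) + exp (- fst (F s))) * cos (snd (F s)))%R.
Proof.
  intros Hs. pose proof (f_equal2 Cplus (cexp_F s Hs) (cexp_neg_F s Hs)) as E.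
  replace (RtoC s * x + Q s + (Q s - RtoC s * x)) with (2 * Q s) in E by ring.
  revert E. generalize (Q s) (F s). intros [q1 q2] [a b] E.
  apply (f_equal fst) in E. unfold cexp in E. simpl in E |- *.
  replace (-1 * a - 0 * b)%R with (- a)%R in E by ring.
  replace (-1 * b + 0 * a)%R with (- b)%R in E by ring.
  rewrite cos_neg in E. lra.
Qed.

Lemma cos_Im_F_neq_0 s : (0 <= s <= 1)%R -> cos (snd (F s)) <> 0%R.
Proof.
  intros Hs Hc. pose proof (Re_Q s Hs) as HRe. rewrite Hc, Rmult_0_r in HRe.
  pose proof (f_equal fst (Q_sq s Hs)) as E. unfold q in E.
  destruct (Q s) as [q1 q2], x as [x1 x2]. simpl in HRe, E |- *.
  assert (Hq1 : q1 = 0%R) by lra. subst q1.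
  assert (Hm : (x1 * x1 + x2 * x2 < 1)%R).
  { pose proof (Cmod2_alt (x1, x2)) as C2. unfold Re, Im in C2. simpl in C2. nra. }
  assert (0 <= s * s <= 1)%R by nra.
  nra.
Qed.

Lemma Im_F_bound s : (0 <= s <= 1)%R -> (- (PI / 2) < snd (F s) < PI / 2)%R.
Proof.
  intros Hs. pose proof PI_RGT_0.
  assert (Hcont : forall u, (0 <= u <= 1)%R -> continuity_pt (fun u => snd (F u)) u).
  { intros u Hu. apply continuity_pt_filterlim, (ex_derive_continuous (V := R_NormedModule)).
    exists (snd (F1 u)). apply (is_derive_F u Hu). }
  assert (HF0 : snd (F 0%R) = 0%R) by (rewrite F_0; reflexivity).
  split.
  - apply Ropp_lt_cancel. rewrite Ropp_involutive.
    apply (continuity_stays_below (fun u => - snd (F u)) 0 1)%R; try lra.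
    + intros u Hu. apply continuity_pt_opp, Hcont, Hu.
    + intros u Hu E. apply (cos_Im_F_neq_0 u Hu).
      replace (snd (F u)) with (- (PI / 2))%R by lra. rewrite cos_neg. apply cos_PI2.
  - apply (continuity_stays_below (fun u => snd (F u)) 0 1); try lra; [exact Hcont|].
    intros u Hu E. apply (cos_Im_F_neq_0 u Hu). rewrite E. apply cos_PI2.
Qed.

Lemma arsinh_ray_series : is_series a0 (Carsinh x).
Proof.
  assert (H1 : (0 <= 1 <= 1)%R) by lra.
  pose proof (Im_F_bound 1 H1) as HIm.
  assert (HQ : (0 < fst (Q 1%R))%R).
  { pose proof (Re_Q 1 H1) as HRe.
    assert (0 < cos (snd (F 1%R)))%R by (apply cos_gt_0; lra).
    pose proof (exp_pos (fst (F 1%R))). pose proof (exp_pos (- fst (F 1%R))). nra. }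
  replace (Carsinh x) with (F 1%R).
  - pose proof (is_pseries_PSeriesC a0 1 (proj1 (in_CV_disk_ray 1 H1))) as H.
    eapply is_series_ext; [|exact H]. intros n.
    change (pow_n (RtoC 1) n * a0 n = a0 n).
    rewrite pow_n_powC, powC_RtoC, pow1. apply Cmult_1_l.
  - unfold Carsinh.
    replace (x * x + 1) with (Q 1%R * Q 1%R) by (rewrite Q_sq by exact H1; unfold q; ring).
    rewrite Csqrt_sq by exact HQ.
    replace (x + Q 1%R) with (cexp (F 1%R)) by (rewrite cexp_F by exact H1; ring).
    symmetry. apply Clog_cexp, HIm.
Qed.

End ArsinhAlongRay.

Lemma Carsinh_0 : Carsinh 0 = 0.
Proof.
  unfold Carsinh. replace (0 * 0 + 1) with (RtoC 1 * RtoC 1) by ring.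
  rewrite Csqrt_sq by (simpl; lra).
  replace (0 + RtoC 1) with (cexp 0) by (rewrite cexp_0; ring).
  apply Clog_cexp. simpl. pose proof PI_RGT_0. lra.
Qed.

Lemma arsinh_series x : (Cmod x < 1)%R ->
  is_series (fun n => master_coef 0 2 1 n * powC x n) (Carsinh x).
Proof.
  intros Hx. apply (is_series_ext (arsinh_ray x)).
  { intros n. unfold arsinh_ray. rewrite master_coef_RtoC. reflexivity. }
  destruct (Ceq_dec x 0) as [->|Hx0].
  - rewrite Carsinh_0.
    eapply is_series_ext; [|exact (is_pseries_0 (fun n => RtoC (arsinh_coef n)))].
    intros n.
    change (pow_n (K := C_AbsRing) (RtoC 0) n * RtoC (arsinh_coef n) = arsinh_ray 0 n).
    unfold arsinh_ray. rewrite pow_n_powC. apply Cmult_comm.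
  - apply arsinh_ray_series. split; [|exact Hx]. apply Cmod_gt_0, Hx0.
Qed.

Theorem mainTheorem7 :
  (* (i) M(1;2;1;x) * M(1;2;1;-x) = 1 as formal power series *)
  (forall n : nat,
      sum_n (fun k => master_coef 1 2 1 k
                      * (powC (-1) (n - k) * master_coef 1 2 1 (n - k))) n
      = (if Nat.eqb n 0 then RtoC 1 else RtoC 0))
  /\
  (* (ii) M(0;2;1;x) = - M(0;2;1;-x) as formal power series *)
  (forall n : nat,
      master_coef 0 2 1 n = - (powC (-1) n * master_coef 0 2 1 n))
  /\
  (* (iii) for |x| < 1 the series M(0;2;1;x) converges to arsinh x *)
  (forall x : C, (Cmod x < 1)%R ->
      is_series (fun n => master_coef 0 2 1 n * powC x n) (Carsinh x)).
Proof.
  split; [exact master_coef_reflection | split; [exact master_coef_odd | exact arsinh_series]].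
Qed.
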